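(* The relation algebra $30_{65}$ has a representation on a finite set.
   Context: $30_{65}$ is the finite symmetric integral relation algebra with atoms $1',a,b,c$ whose mandatory diversity cycle types are exactly $aaa, ccc, abb, baa, caa, abc$ (so $bbb, acc, bcc, cbb$ are forbidden); a cycle type is the multiset of colors of the sides of a triangle, e.g. $baa$ = one side $b$, two sides $a$. A representation on a set $X$ is a coloring of all 2-element subsets of $X$ by $a,b,c$, each color used, such that: for every mandatory type $\{h,i,j\}$, every edge $\{x,y\}$ colored $h$ (for each choice of $h$ among the three colors of the type) and each ordering $(i,j)$ of the remaining two colors, some $z$ has $\{x,z\}$ colored $i$ and $\{z,y\}$ colored $j$; and no triangle of a forbidden type occurs. *)

From HB Require Import structures.
From mathcomp Require Import all_boot.
Set Implicit Arguments. Unset Strict Implicit. Unset Printing Implicit Defensive.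

(* The three diversity atoms a, b, c of 30_65. *)
Inductive col := Ca | Cb | Cc.

Definition col_code (c : col) : 'I_3 :=
  match c with Ca => inord 0 | Cb => inord 1 | Cc => inord 2 end.
Definition col_decode (i : 'I_3) : col :=
  match val i with 0 => Ca | 1 => Cb | _ => Cc end.
Lemma col_codeK : cancel col_code col_decode.
Proof. by case; rewrite /col_decode /= inordK. Qed.
HB.instance Definition _ := Equality.copy col (can_type col_codeK).
HB.instance Definition _ := Finite.copy col (can_type col_codeK).

(* Cycle types are multisets of three colours, written as sequences;
   a triple (h,i,j) has a given type iff [:: h; i; j] is a permutation of it. *)
Definition mandatory_types : seq (seq col) :=
  [:: [:: Ca; Ca; Ca]; [:: Cc; Cc; Cc]; [:: Ca; Cb; Cb];
      [:: Cb; Ca; Ca]; [:: Cc; Ca; Ca]; [:: Ca; Cb; Cc]].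
Definition forbidden_types : seq (seq col) :=
  [:: [:: Cb; Cb; Cb]; [:: Ca; Cc; Cc]; [:: Cb; Cc; Cc]; [:: Cc; Cb; Cb]].

Definition mandatory (h i j : col) : bool :=
  has (perm_eq [:: h; i; j]) mandatory_types.
Definition forbidden (h i j : col) : bool :=
  has (perm_eq [:: h; i; j]) forbidden_types.

(* A colouring of the 2-element subsets of X is given by a function on
   ordered pairs that is symmetric on distinct points (values on the
   diagonal are irrelevant). *)
Definition is_representation (X : finType) (f : X -> X -> col) : Prop :=
  (forall x y : X, x != y -> f x y = f y x) /\
  (forall c : col, exists x y : X, x != y /\ f x y = c) /\
  (forall (x y : X) (h i j : col), x != y -> mandatory h i j -> f x y = h ->
     exists z : X, [/\ z != x, z != y, f x z = i & f z y = j]) /\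
  (forall x y z : X, x != y -> y != z -> x != z ->
     ~~ forbidden (f x y) (f y z) (f x z)).

(* Colour the edge {x, y} of Z_65 by a function of y - x.  By translation
   invariance, the representation conditions then only involve differences,
   and are checked by computation over pairs of differences.  Under
   Z_65 = Z_5 x Z_13, the atom c consists of the nonzero elements of the
   subgroup of order 5, the atom b is the graph {(s v, v) | v <> 0} of an odd
   map s : Z_13 -> Z_5 (tabulated as b_map), and a is everything else;
   oddness of s makes the colouring symmetric. *)

From mathcomp Require Import all_boot ssralg finalg zmodp.

Import GRing.Theory.
Local Open Scope ring_scope.

Section CayleyColouring.

Variables (G : finZmodType) (colour : G -> col).

Definition cayley_colouring (x y : G) : col := colour (y - x).

Hypothesis colourN : forall d, d != 0 -> colour (- d) = colour d.
Hypothesis colour_used : forall c, exists2 d, d != 0 & colour d = c.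
Hypothesis colour_mandatory : forall d i j, d != 0 -> mandatory (colour d) i j ->
  exists e, [/\ e != 0, e != d, colour e = i & colour (d - e) = j].
Hypothesis colour_not_forbidden : forall d e, d != 0 -> e != 0 -> d != e ->
  ~~ forbidden (colour d) (colour (e - d)) (colour e).

Lemma cayley_colouring_representation : is_representation cayley_colouring.
Proof.
have subr_neq0 (x y : G) : x != y -> y - x != 0 by rewrite subr_eq0 eq_sym.
rewrite /cayley_colouring; split; [|split; [|split]].
- by move=> x y /subr_neq0 xy; rewrite -[x - y]opprB colourN.
- move=> c; have [d d0 <-] := colour_used c.
  by exists 0, d; rewrite subr0 eq_sym.
- move=> x y h i j /subr_neq0 xy mand_hij cxy; subst h.
  have [e [e0 ed <- <-]] := colour_mandatory _ _ _ xy mand_hij.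
  exists (e + x); rewrite addrK; split=> //.
  + by rewrite -subr_eq0 addrK.
  + by apply: contra ed => /eqP <-; rewrite addrK.
  + by congr colour; rewrite opprD addrA addrAC.
- move=> x y z xy yz xz.
  have -> : z - y = (z - x) - (y - x) by rewrite opprB addrA subrK.
  by apply: colour_not_forbidden; rewrite ?subr_neq0 // (can_eq (subrK x)).
Qed.

End CayleyColouring.

(* Equality on col (through inord) and the enumeration of ordinals (through
   insub) are blocked under vm_compute by the opaque idP; computations
   therefore compare colours through col_index and enumerate 'Z_p with inZp. *)
Definition col_index (c : col) : nat := match c with Ca => 0 | Cb => 1 | Cc => 2 end.

Lemma col_index_inj : injective col_index.
Proof. by do 2 case. Qed.

Definition col_eqb (x y : col) : bool := col_index x == col_index y.

Lemma col_eqbE x y : col_eqb x y = (x == y).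
Proof. exact: (inj_eq col_index_inj). Qed.

Definition has_cycle_type (types : seq (seq col)) (h i j : col) : bool :=
  has (perm_eq (map col_index [:: h; i; j])) (map (map col_index) types).

Lemma has_cycle_typeE types h i j :
  has_cycle_type types h i j = has (perm_eq [:: h; i; j]) types.
Proof.
rewrite /has_cycle_type; move: [:: h; i; j] => s.
rewrite has_map; apply: eq_has => t /=.
by apply/idP/idP => [/(perm_map_inj col_index_inj)|/(perm_map col_index)].
Qed.

Definition cols : seq col := [:: Ca; Cb; Cc].

Lemma mem_cols c : c \in cols.
Proof. by case: c; rewrite !inE eqxx ?orbT. Qed.

Definition Zp_elems (p' : nat) : seq 'I_p'.+1 := [seq inZp i | i <- iota 0 p'.+1].

Lemma mem_Zp_elems {p'} (x : 'I_p'.+1) : x \in Zp_elems p'.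
Proof. by apply/mapP; exists (val x); rewrite ?valZpK // mem_iota ltn_ord. Qed.

Definition b_map : seq nat := [:: 0; 1; 3; 1; 4; 3; 3; 2; 2; 1; 4; 2; 4].

Definition colour65 (d : 'Z_65) : col :=
  if (d %% 13 == 0)%N then Cc
  else if (d %% 5 == nth 0 b_map (d %% 13))%N then Cb else Ca.

Local Notation Z65 := (Zp_elems 64).

Lemma colour65N d : d != 0 -> colour65 (- d) = colour65 d.
Proof.
have : all (fun d => (d != 0) ==> col_eqb (colour65 (- d)) (colour65 d)) Z65.
  by vm_compute.
by move=> /allP/(_ d (mem_Zp_elems d)); rewrite col_eqbE => /implyP d0 /d0/eqP.
Qed.

Lemma colour65_used c : exists2 d, d != 0 & colour65 d = c.
Proof.
have : all (fun c => has (fun d => (d != 0) && col_eqb (colour65 d) c) Z65) cols.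
  by vm_compute.
move=> /allP/(_ c (mem_cols c))/hasP[d _ /andP[d0]].
by rewrite col_eqbE => /eqP; exists d.
Qed.

Lemma colour65_mandatory d i j : d != 0 -> mandatory (colour65 d) i j ->
  exists e, [/\ e != 0, e != d, colour65 e = i & colour65 (d - e) = j].
Proof.
have : all (fun d => all (fun i => all (fun j =>
    (d != 0) && has_cycle_type mandatory_types (colour65 d) i j ==>
    has (fun e => [&& e != 0, e != d, col_eqb (colour65 e) i
                                    & col_eqb (colour65 (d - e)) j]) Z65)
    cols) cols) Z65.
  by vm_compute.
move=> /allP/(_ d (mem_Zp_elems d))/allP/(_ i (mem_cols i))/allP/(_ j (mem_cols j)).
rewrite has_cycle_typeE => /implyP witness d0 dij.
have /hasP[e _ /and4P[e0 ed]] := witness (introT andP (conj d0 dij)).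
by rewrite !col_eqbE => /eqP ei /eqP ej; exists e.
Qed.

Lemma colour65_not_forbidden d e : d != 0 -> e != 0 -> d != e ->
  ~~ forbidden (colour65 d) (colour65 (e - d)) (colour65 e).
Proof.
have : all (fun d => all (fun e => [&& d != 0, e != 0 & d != e] ==>
    ~~ has_cycle_type forbidden_types (colour65 d) (colour65 (e - d)) (colour65 e))
    Z65) Z65.
  by vm_compute.
move=> /allP/(_ d (mem_Zp_elems d))/allP/(_ e (mem_Zp_elems e)).
by rewrite has_cycle_typeE => /implyP forb d0 e0 de; apply: forb; apply/and3P.
Qed.

Theorem mainTheorem7 :
  exists (n : nat) (f : 'I_n -> 'I_n -> col), is_representation f.
Proof.
exists 65, (@cayley_colouring _ colour65).
apply: cayley_colouring_representation.
- exact: colour65N.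
- exact: colour65_used.
- exact: colour65_mandatory.
- exact: colour65_not_forbidden.
Qed.
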